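(* In the Ewens setting, $W(1,0)=\theta$, and for every $N\ge2$: $$W(N,0)=(N-1)\,W(N-1,0),$$ $$W(N,k)=(N-1)\,W(N-1,k)+\frac{(N-2)!}{(k-1)!}\,\theta\,[k]_\theta\qquad\text{for }1\le k\le N-1,$$ where $W(N-1,N-1):=0$.
   Context: Permutations of $\{1,\dots,N\}$ are written in one-line notation; $\mathfrak S_N$ is the set of all of them. An entry $\pi_j$ is a left-to-right maximum if $\pi_j>\pi_i$ for all $i<j$; $\mathrm{lrm}(\pi)$ is the number of left-to-right maxima of $\pi$. Let $\theta>0$ (or $\theta$ an indeterminate). For $0\le k\le N-1$, a permutation $\pi\in\mathfrak S_N$ is $k$-winnable if the first index $j>k$ such that $\pi_j$ is a left-to-right maximum satisfies $\pi_j=N$. Equivalently, $\pi$ is won by the strategy that rejects the first $k$ candidates and accepts the next left-to-right maximum. Ewens setting: $W(N,k)=\sum_{k\text{-winnable }\pi\in\mathfrak S_N}\theta^{\mathrm{lrm}(\pi)}$, with $W(N,N):=0$, and $[m]_\theta=\theta(\theta+1)\cdots(\theta+m-1)$ with $[0]_\theta=1$. *)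

From HB Require Import structures.
From mathcomp Require Import all_boot all_order all_algebra all_fingroup.
Set Implicit Arguments. Unset Strict Implicit. Unset Printing Implicit Defensive.
Import GRing.Theory.
Local Open Scope ring_scope.

(* Permutations of {1,...,N} are modelled as 'S_N = {perm 'I_N}: the value
   v : 'I_N stands for v+1, and the 0-indexed position j : 'I_N stands for the
   paper's position j+1.  So pi_{j+1} (paper) = s j + 1. *)

Definition is_lrm (N : nat) (s : 'S_N) (j : 'I_N) : bool :=
  [forall i : 'I_N, (i < j)%N ==> (s i < s j)%N].

Definition lrm (N : nat) (s : 'S_N) : nat := #|[pred j : 'I_N | is_lrm s j]|.

(* k-winnable: the first (paper) index j > k, i.e. 0-indexed j >= k, that is a
   left-to-right maximum exists and carries the maximal value N (here N-1). *)
Definition winnable (N k : nat) (s : 'S_N) : bool :=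
  [exists j : 'I_N,
     [&& (k <= j)%N, is_lrm s j, (val (s j) == N.-1)%N &
         [forall i : 'I_N, ((k <= i)%N && (i < j)%N) ==> ~~ is_lrm s i]]].

(* W(N,k) = sum over k-winnable permutations of theta^lrm.
   For k >= N no permutation is k-winnable, so W(N,N) = 0 holds by definition. *)
Definition W (R : comRingType) (theta : R) (N k : nat) : R :=
  \sum_(s : 'S_N | winnable k s) theta ^+ lrm s.

Definition rising (R : comRingType) (theta : R) (m : nat) : R :=
  \prod_(i < m) (theta + i%:R).

From HB Require Import structures.
From mathcomp Require Import all_boot all_order all_algebra all_fingroup.
From mathcomp Require Import zify.
Set Implicit Arguments. Unset Strict Implicit. Unset Printing Implicit Defensive.
Import GRing.Theory.
Local Open Scope ring_scope.

(* Every permutation of size n+1 arises exactly once from a permutation of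
   size n by appending a last entry of value v and shifting the values >= v up
   ([lift_perm ord_max v]).  The appended entry is a left-to-right maximum iff
   v is the maximal value, and otherwise neither the left-to-right maxima nor
   k-winnability change.  When v is maximal, the permutation is k-winnable iff
   no left-to-right maximum occurs at a (0-indexed) position >= k before it.
   Writing V(n,k) for the theta^lrm-weight of those permutations, this gives
   W(n+1,k) = n W(n,k) + theta V(n,k) for k <= n, and the same decomposition
   gives V(n+1,k) = n V(n,k) for k <= n and (theta+n) V(n,k) for k > n, so
   V(k,k) = [k]_theta and V(k+d,k) = (k+d-1)^_d [k]_theta. *)

Lemma forall_ord_lift n (P : pred 'I_n.+1) :
  [forall i, P i] = P ord_max && [forall i : 'I_n, P (lift ord_max i)].
Proof.
apply/forallP/andP => [H | [H1 /forallP H2] i]; first by split => //; apply/forallP.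
by case: (unliftP ord_max i) => [j|] ->.
Qed.

Lemma exists_ord_lift n (P : pred 'I_n.+1) :
  [exists i, P i] = P ord_max || [exists i : 'I_n, P (lift ord_max i)].
Proof.
apply/existsP/orP => [[i] | [H | /existsP [i H]]]; last by exists (lift ord_max i).
  by case: (unliftP ord_max i) => [j|] -> H; [right; apply/existsP; exists j | left].
by exists ord_max.
Qed.

Lemma card_ord_lift n (P : pred 'I_n.+1) :
  #|P| = (P ord_max + #|[pred i : 'I_n | P (lift ord_max i)]|)%N.
Proof.
by rewrite -!sum1_card big_mkcond [in RHS]big_mkcond (bigD1_ord ord_max).
Qed.

Lemma lift_max_neq n (i : 'I_n) : (lift ord_max i == ord_max) = false.
Proof. by rewrite eq_sym (negbTE (neq_lift _ _)). Qed.

Lemma ltn_lift n (v : 'I_n.+1) (a b : 'I_n) : (lift v a < lift v b)%N = (a < b)%N.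
Proof. by rewrite /= !ltnNge leq_bump2. Qed.

Lemma lift_eq_max n (v : 'I_n.+1) (x : 'I_n) :
  v != ord_max -> (lift v x == n :> nat) = (x == n.-1 :> nat).
Proof.
move=> vmax; have vn : (v < n)%N by rewrite ltn_neqAle -ltnS ltn_ord andbT.
by have := ltn_ord x; rewrite /= /bump; case: leqP => vx xn; apply/eqP/eqP; lia.
Qed.

Definition lrm_before (N k : nat) (s : 'S_N) : bool :=
  [forall i : 'I_N, (k <= i)%N ==> ~~ is_lrm s i].

Lemma is_lrm_ord0 n (s : 'S_n.+1) : is_lrm s ord0.
Proof. by apply/forallP. Qed.

Section InsertLast.
Variable n : nat.
Implicit Types (v : 'I_n.+1) (s : 'S_n).

Lemma lift_perm_max_inj :
  injective (fun p : 'I_n.+1 * 'S_n => lift_perm ord_max p.1 p.2).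
Proof.
move=> [v s] [v' s'] /= E.
have Ev : v = v' by rewrite -(lift_perm_id ord_max v s) E lift_perm_id.
rewrite -Ev in E *; congr (_, _); apply/permP => j; apply: (@lift_inj _ v).
by rewrite -!(lift_perm_lift ord_max) E.
Qed.

Lemma sum_perm_lift_max (R : nmodType) (F : 'S_n.+1 -> R) :
  \sum_(s : 'S_n.+1) F s = \sum_(v : 'I_n.+1) \sum_(s : 'S_n) F (lift_perm ord_max v s).
Proof.
have cardE : #|{: 'I_n.+1 * 'S_n}| = #|'S_n.+1|.
  by rewrite card_prod card_ord !card_Sn factS.
rewrite pair_bigA /= (reindex _ (onW_bij _ (inj_card_bij lift_perm_max_inj _))) //.
by rewrite cardE.
Qed.

Lemma is_lrm_lift_perm_max_lift v s j :
  is_lrm (lift_perm ord_max v s) (lift ord_max j) = is_lrm s j.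
Proof.
rewrite /is_lrm forall_ord_lift lift_max ltnNge (ltnW (ltn_ord j)) implyFb andTb.
by apply: eq_forallb => i; rewrite lift_max !lift_perm_lift ltn_lift.
Qed.

Lemma is_lrm_lift_perm_max v s :
  is_lrm (lift_perm ord_max v s) ord_max = (v == ord_max).
Proof.
rewrite /is_lrm forall_ord_lift ltnn implyFb andTb lift_perm_id.
under eq_forallb => i do rewrite lift_max ltn_ord implyTb lift_perm_lift.
apply/forallP/eqP => [vlast | -> i]; last by rewrite lift_max ltn_ord.
apply/val_inj/eqP; rewrite /= eqn_leq -ltnS ltn_ord leqNgt; apply/negP => vn.
by have := vlast (s^-1 (Ordinal vn))%g; rewrite permKV /= /bump leqnn ltnNge leqnSn.
Qed.

Lemma lrm_lift_perm_max v s :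
  lrm (lift_perm ord_max v s) = (lrm s + (v == ord_max))%N.
Proof.
rewrite /lrm card_ord_lift /= is_lrm_lift_perm_max addnC; congr (_ + _)%N.
by apply: eq_card => j; rewrite !inE is_lrm_lift_perm_max_lift.
Qed.

Lemma lrm_before_lift_perm_max v s k :
  lrm_before k (lift_perm ord_max v s) =
  ((k <= n)%N ==> (v != ord_max)) && lrm_before k s.
Proof.
rewrite /lrm_before forall_ord_lift is_lrm_lift_perm_max; congr (_ && _).
by apply: eq_forallb => i; rewrite lift_max is_lrm_lift_perm_max_lift.
Qed.

Lemma winnable_lift_perm_max v s k :
  winnable k (lift_perm ord_max v s) =
  if v == ord_max then (k <= n)%N && lrm_before k s else winnable k s.
Proof.
set t := lift_perm ord_max v s.
have no_lrm_upto_lift (j : 'I_n) :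
    [forall i : 'I_n.+1, (k <= i < lift ord_max j)%N ==> ~~ is_lrm t i] =
    [forall i : 'I_n, (k <= i < j)%N ==> ~~ is_lrm s i].
  rewrite (forall_ord_lift (fun i => _)) lift_max ltnNge (ltnW (ltn_ord j)).
  rewrite andbF implyFb andTb.
  by apply: eq_forallb => i; rewrite lift_max is_lrm_lift_perm_max_lift.
have no_lrm_upto_max :
    [forall i : 'I_n.+1, (k <= i < @ord_max n)%N ==> ~~ is_lrm t i] = lrm_before k s.
  rewrite (forall_ord_lift (fun i => _)) ltnn andbF implyFb andTb.
  by apply: eq_forallb => i; rewrite lift_max ltn_ord andbT is_lrm_lift_perm_max_lift.
rewrite /winnable exists_ord_lift is_lrm_lift_perm_max lift_perm_id no_lrm_upto_max.
under eq_existsb => j do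
  rewrite no_lrm_upto_lift lift_max is_lrm_lift_perm_max_lift lift_perm_lift.
case: eqVneq => [-> | vmax].
  rewrite !eqxx !andTb; apply/orP/idP => [[// | /existsP[x /and3P[_ _]]] | ];
    last by left.
  by rewrite /= /bump leqNgt ltn_ord add0n ltn_eqF.
rewrite andFb andbF orFb.
by apply: eq_existsb => x; rewrite lift_eq_max.
Qed.

End InsertLast.

Section Weights.
Variables (R : comRingType) (theta : R).

Definition lrm_before_weight (N k : nat) : R :=
  \sum_(s : 'S_N | lrm_before k s) theta ^+ lrm s.

Lemma WS n k : W theta n.+1 k =
  n%:R * W theta n k + (if (k <= n)%N then theta * lrm_before_weight n k else 0).
Proof.
rewrite /W big_mkcond sum_perm_lift_max (bigD1_ord ord_max) //= addrC.
congr (_ + _).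
  under eq_bigr => v _ do under eq_bigr => s _ do
    rewrite winnable_lift_perm_max lrm_lift_perm_max lift_max_neq addn0.
  by rewrite sumr_const card_ord [in RHS]big_mkcond mulr_natl.
under eq_bigr => s _ do rewrite winnable_lift_perm_max lrm_lift_perm_max eqxx.
case: (k <= n)%N; last by rewrite big1_eq.
rewrite /lrm_before_weight big_distrr [RHS]big_mkcond; apply: eq_bigr => s _ /=.
by rewrite addn1 exprS; case: lrm_before; rewrite ?mulr0.
Qed.

Lemma lrm_before_weightS n k : lrm_before_weight n.+1 k =
  (if (k <= n)%N then n%:R else theta + n%:R) * lrm_before_weight n k.
Proof.
rewrite /lrm_before_weight big_mkcond sum_perm_lift_max (bigD1_ord ord_max) //= addrC.
under eq_bigr => v _ do under eq_bigr => s _ do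
  rewrite lrm_before_lift_perm_max lrm_lift_perm_max lift_max_neq addn0 implybT.
under [X in _ + X]eq_bigr => s _ do
  rewrite lrm_before_lift_perm_max lrm_lift_perm_max eqxx addn1.
rewrite sumr_const card_ord [in RHS]big_mkcond.
case: (k <= n)%N => /=; first by rewrite big1_eq addr0 mulr_natl.
rewrite mulrDl mulr_natl addrC; congr (_ + _).
rewrite big_distrr; apply: eq_bigr => s _ /=.
by rewrite exprS; case: lrm_before; rewrite ?mulr0.
Qed.

Lemma lrm_before_weight_ge M k : (M <= k)%N -> lrm_before_weight M k = rising theta M.
Proof.
elim: M => [_ | M IH Mk].
  rewrite /lrm_before_weight /rising big_ord0 (eq_bigl predT); last first.
    by move=> s; apply/forallP => -[].
  rewrite (eq_bigr (fun=> 1)) ?sumr_const ?card_Sn // => s _.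
  by rewrite /lrm eq_card0 // => -[].
by rewrite lrm_before_weightS leqNgt Mk IH ?(ltnW Mk) // /rising big_ord_recr mulrC.
Qed.

Lemma lrm_before_weight0 n : lrm_before_weight n.+1 0 = 0.
Proof.
rewrite /lrm_before_weight big_pred0 // => s.
by apply/negbTE/forallP => /(_ ord0); rewrite is_lrm_ord0.
Qed.

Lemma lrm_before_weight_addn k d :
  lrm_before_weight (k + d) k = ((k + d).-1 ^_ d)%:R * rising theta k.
Proof.
elim: d => [|d IH]; first by rewrite addn0 lrm_before_weight_ge // mul1r.
by rewrite addnS lrm_before_weightS leq_addr IH mulrA -natrM ffactnS.
Qed.

End Weights.

Theorem theorem4p3 (R : comRingType) (theta : R) :
  W theta 1 0 = theta /\
  (forall N : nat, (2 <= N)%N ->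
     W theta N 0 = (N - 1)%:R * W theta (N - 1) 0 /\
     (forall k : nat, (1 <= k <= N - 1)%N ->
        W theta N k = (N - 1)%:R * W theta (N - 1) k
                      + ((N - 2)`! %/ (k - 1)`!)%:R * theta * rising theta k)).
Proof.
split; first by rewrite WS mul0r add0r lrm_before_weight_ge // /rising big_ord0 mulr1.
case=> [|[|n]] // _; rewrite subn1 subn2 /=; split.
  by rewrite WS lrm_before_weight0 mulr0 addr0.
move=> k /andP[k_gt0 k_le]; rewrite WS k_le.
have [d n1E] : exists d, n.+1 = (k + d)%N by exists (n.+1 - k)%N; rewrite subnKC.
have factE : (n ^_ d = n`! %/ (k - 1)`!)%N.
  have -> : (k - 1 = n - d)%N by lia.
  by rewrite ffact_factd //; lia.
by rewrite n1E lrm_before_weight_addn -n1E succnK factE mulrCA mulrA.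
Qed.
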